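(* Let $G$ be a compact metrizable abelian monothetic group with Haar measure $\mu$. If $A\subset G$ has $\mu(A)>0$, then $2A-A=\{2a-b:a,b\in A\}$ contains a nonempty open set.
   Context: A topological group is monothetic if it has a dense cyclic subgroup. *)

From HB Require Import structures.
From mathcomp Require Import all_boot all_order all_algebra.
From mathcomp Require Import all_classical all_reals all_analysis.
Set Implicit Arguments. Unset Strict Implicit. Unset Printing Implicit Defensive.
Import Order.TTheory GRing.Theory Num.Theory.
Local Open Scope classical_set_scope.
Local Open Scope ring_scope.

Definition metrizable (R : realType) (T : topologicalType) : Prop :=
  exists d : T -> T -> R,
    [/\ (forall x y, 0 <= d x y),
        (forall x y, d x y = 0 <-> x = y),
        (forall x y, d x y = d y x),
        (forall x y z, d x z <= d x y + d y z) &
        (forall U : set T, open U <->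
           (forall x, U x -> exists2 e : R, 0 < e & [set y | d x y < e] `<=` U))].

Definition monothetic (G : topologicalZmodType) : Prop :=
  exists g : G, dense [set g *~ n | n in [set: int]].

(* The Borel sigma-algebra of a topological abelian group G:
   [borel_of G] is G (as a type) equipped with the sigma-algebra generated
   by the open sets of G. *)
Definition borel_of (G : topologicalZmodType) : Type := G.
Section BorelInstance.
Variable G : topologicalZmodType.
HB.instance Definition _ := Choice.on (borel_of G).
HB.instance Definition _ := isPointed.Build (borel_of G) (0 : G).
Definition borel_opens : set (set (borel_of G)) := [set U | open U].
HB.instance Definition _ := @isMeasurable.Build (sigma_display borel_opens)
  (borel_of G) <<s borel_opens >> (@sigma_algebra0 _ setT borel_opens)
  (@sigma_algebraC _ borel_opens) (@sigma_algebra_bigcup _ setT borel_opens).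
End BorelInstance.

Definition haar_measure (R : realType) (G : topologicalZmodType)
    (mu : set (borel_of G) -> \bar R) : Prop :=
  mu [set: borel_of G] = 1%E /\
  (forall (x : G) (A : set (borel_of G)), measurable A ->
     mu [set x + a | a in A] = mu A).

Definition twoA_minus_A (G : zmodType) (A : set G) : set G :=
  [set a *+ 2 - b | a in A & b in A].

From HB Require Import structures.
From mathcomp Require Import all_boot all_order all_algebra.
From mathcomp Require Import all_classical all_reals all_analysis.
From mathcomp Require Import measurable_realfun lra zify.
Import Order.TTheory GRing.Theory Num.Theory.
Local Open Scope classical_set_scope.
Local Open Scope ring_scope.
Set Implicit Arguments. Unset Strict Implicit. Unset Printing Implicit Defensive.

(* Fubini applied to {(a, y) | a \in A, 2a + y \in A}, whose sections in [a]
   are the translates -2a + A, gives y0 such that S = {a \in A | 2a + y0 \in A}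
   has positive measure.  A finite Borel measure on a metric space is regular,
   so Steinhaus' argument makes S - S a neighbourhood V of 0, and
   2V - y0 is contained in 2A - A.  It remains that doubling is an open map
   on a compact monothetic group G with generator g: 2G is closed, and the
   density of the multiples of g forces G = 2G \cup (g + 2G), so that 2G is
   open.  Compactness and metrizability also make G second countable, so that
   the open sets of G * G lie in the product sigma-algebra used by Fubini. *)

Section metric_topology.
Variables (R : realType) (T : topologicalType) (d : T -> T -> R).
Hypotheses (d0 : forall x y, 0 <= d x y) (dE : forall x y, d x y = 0 <-> x = y)
  (dC : forall x y, d x y = d y x) (dT : forall x y z, d x z <= d x y + d y z)
  (dO : forall U : set T, open U <->
           (forall x, U x -> exists2 e : R, 0 < e & [set y | d x y < e] `<=` U)).

Local Notation dball x e := [set y | d x y < e].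

Let dxx x : d x x = 0. Proof. exact/dE. Qed.

Lemma open_dball x e : open (dball x e).
Proof.
apply/dO => y /= dxy; exists (e - d x y) => [|z /= dyz]; first by rewrite subr_gt0.
by have := dT x y z; lra.
Qed.

Lemma nbhs_dball x e : 0 < e -> nbhs x (dball x e).
Proof.
by move=> e0; apply: open_nbhs_nbhs; split; [exact: open_dball|rewrite /= dxx].
Qed.

Lemma nbhs_dballP x U : nbhs x U -> exists2 e, 0 < e & dball x e `<=` U.
Proof.
rewrite nbhsE => -[B [oB Bx] BU]; have [e e0 Be] := (dO B).1 oB x Bx.
by exists e => // y /Be /BU.
Qed.

Lemma metric_hausdorff : hausdorff_space T.
Proof.
move=> x y clxy; apply: contrapT => xy.
have dxy : 0 < d x y by rewrite lt_neqAle d0 andbT eq_sym; apply/eqP => /dE.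
have [z [/= xz yz]] := clxy _ _ (nbhs_dball x (divr_gt0 dxy (ltr0Sn _ 1)))
  (nbhs_dball y (divr_gt0 dxy (ltr0Sn _ 1))).
by have := dT x z y; rewrite (dC z y); lra.
Qed.

Lemma open_bigcup_closed (U : set T) : open U ->
  exists F : (set T)^nat, (forall n, closed (F n)) /\ \bigcup_n F n = U.
Proof.
move=> oU; pose F n := [set x | forall z, ~ U z -> n.+1%:R^-1 <= d z x].
exists F; split.
  move=> n; rewrite -openC; apply/dO => x /existsNP[z /not_implyP[Uz /negP]].
  rewrite -ltNge => dzx; exists (n.+1%:R^-1 - d z x); first by rewrite subr_gt0.
  move=> y /= dxy Fy; have := Fy z Uz; have := dT z x y.
  by move: (n.+1%:R^-1) dzx dxy => r; lra.
apply/seteqP; split=> [x [n _ Fx]|x Ux].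
  by apply: contrapT => Ux; have := Fx x Ux; rewrite dxx leNgt invr_gt0 ltr0Sn.
have [e e0 xeU] := (dO U).1 oU x Ux; have [n] := ltr_add_invr e0.
rewrite add0r => ne; exists n => // z Uz; rewrite dC leNgt; apply/negP => dxz.
exact/Uz/xeU/(lt_trans dxz).
Qed.

Lemma compact_finite_net : compact [set: T] ->
  forall e, 0 < e -> exists s : seq T, forall x, exists2 c, c \in s & d c x < e.
Proof.
(* [compact_cover] needs a pointed space; instead, near-covering compactness
   is used with the filter of lists containing any prescribed finite list. *)
move=> /compact_near_coveringP cT e e0.
pose F := filter_from [set: seq T] (fun l => [set s : seq T | {subset l <= s}]).
have F_filter : Filter F.
  apply: filter_from_filter => [|l1 l2 _ _]; first by exists [::].
  exists (l1 ++ l2) => // s l12s.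
  by split=> c cl; apply: l12s; rewrite mem_cat cl ?orbT.
have [|l _ lP] := cT (seq T) F (fun s x => exists2 c, c \in s & d c x < e) F_filter.
  move=> x _; exists (dball x e, [set s : seq T | {subset [:: x] <= s}]).
    by split; [exact: nbhs_dball|exists [:: x]].
  by case=> y s /= [dxy xs]; exists x => //; apply: xs; rewrite mem_seq1.
by exists l => x; apply: lP.
Qed.

Lemma compact_countable_base : compact [set: T] ->
  exists b : nat * nat -> set T, (forall i, open (b i)) /\
    forall x U, nbhs x U -> exists i, b i x /\ b i `<=` U.
Proof.
move=> cT; have /choice[net netP] : forall n : nat, exists s : seq T,
    forall x, exists2 c, c \in s & d c x < n.+1%:R^-1.
  by move=> n; apply: compact_finite_net.
pose b i := if onth (net i.1) i.2 is Some c then dball c i.1.+1%:R^-1 else set0.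
exists b; split=> [i|x U xU].
  by rewrite /b; case: onth => [c|]; [exact: open_dball|exact: open0].
have [e e0 xeU] := nbhs_dballP xU.
have [n] := ltr_add_invr (divr_gt0 e0 (ltr0Sn _ 1)); rewrite add0r => ne.
have [c cn dcx] := netP n x.
have bnc : b (n, index c (net n)) = dball c n.+1%:R^-1.
  by rewrite /b /= onthE (nth_map c) ?index_mem // nth_index.
exists (n, index c (net n)); rewrite bnc; split=> // y /= dcy; apply: xeU => /=.
have := dT x c y; rewrite (dC x c); move: (n.+1%:R^-1) ne dcx dcy => r; lra.
Qed.

End metric_topology.

Lemma add_fun_continuous (T : topologicalType) (G : topologicalZmodType)
  (f g : T -> G) : continuous f -> continuous g -> continuous (f \+ g).
Proof.
move=> cf cg x.
exact: (continuous_comp (cvg_pair (cf x) (cg x)) (@add_continuous G _)).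
Qed.

Lemma addl_continuous (G : topologicalZmodType) (x : G) : continuous (fun y => x + y).
Proof.
by apply: (@add_fun_continuous _ _ (cst x) id) => y; [exact: cvg_cst|exact: cvg_id].
Qed.

Lemma double_continuous (G : topologicalZmodType) : continuous (fun x : G => x *+ 2).
Proof. by apply: (@add_fun_continuous _ _ id id) => x; exact: cvg_id. Qed.

Section borel_sets.
Variable G : topologicalZmodType.

Lemma borel_open (U : set G) : open U -> measurable (U : set (borel_of G)).
Proof. by move=> oU; apply: sub_gen_smallest. Qed.

Lemma borel_closed (U : set G) : closed U -> measurable (U : set (borel_of G)).
Proof.
move=> cU; rewrite -[U]setCK; apply: measurableC.
by apply: borel_open; exact: closed_openC.
Qed.

Lemma open_preimage_measurable_fun d (T : measurableType d) (f : T -> borel_of G) :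
  (forall U : set G, open U -> measurable (f @^-1` U)) -> measurable_fun setT f.
Proof.
move=> fU; apply: (measurability (@borel_opens G)) => //.
by move=> _ [U oU <-]; rewrite setTI; exact: fU.
Qed.

Lemma borel_preimage (f : G -> G) (A : set G) : continuous f ->
  measurable (A : set (borel_of G)) -> measurable (f @^-1` A : set (borel_of G)).
Proof.
move=> cf mA; have fU (U : set G) : open U -> measurable (f @^-1` U : set (borel_of G)).
  by move=> oU; apply: borel_open; move/continuousP : cf; apply.
by rewrite -[_ @^-1` _]setTI; exact: (open_preimage_measurable_fun fU measurableT mA).
Qed.

Lemma image_addl (x : G) (A : set G) :
  [set x + a | a in A] = (fun y => - x + y) @^-1` A.
Proof.
apply/seteqP; split=> [_ [a Aa <-]|y Ay]; first by rewrite /= addKr.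
by exists (- x + y) => //; rewrite addNKr.
Qed.

Lemma borel_addl (x : G) (A : set G) : measurable (A : set (borel_of G)) ->
  measurable ([set x + a | a in A] : set (borel_of G)).
Proof.
by rewrite image_addl; apply: borel_preimage; exact: addl_continuous.
Qed.

Lemma open_prod_measurable (I : countType) (b : I -> set G) :
  (forall i, open (b i)) -> (forall x U, nbhs x U -> exists i, b i x /\ b i `<=` U) ->
  forall W : set (G * G), open W -> measurable (W : set (borel_of G * borel_of G)).
Proof.
move=> ob bbase W oW; pose rect (ij : I * I) := b ij.1 `*` b ij.2.
have -> : W = \bigcup_(ij in [set ij | rect ij `<=` W]) rect ij.
  apply/seteqP; split=> [[x y] Wxy|_ [ij /= ijW /ijW //]].
  have [[U V] /= [xU yV] UVW] : nbhs (x, y) W by exact: open_nbhs_nbhs.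
  have [i [bix biU]] := bbase x U xU; have [j [bjy bjV]] := bbase y V yV.
  by exists (i, j) => //= -[u v] [/biU ? /bjV ?]; exact: UVW.
rewrite bigcup_mkcond; apply: countable_bigcupT_measurable => [|ij].
  exact: countableP.
case: ifPn => _; last exact: measurable0.
by apply: measurableX; apply: borel_open.
Qed.

End borel_sets.

Lemma measure_bigcupD_le d (T : measurableType d) (R : realType)
    (mu : {measure set T -> \bar R}) (O F : (set T)^nat) :
  (forall n, measurable (O n)) -> (forall n, measurable (F n)) ->
  (mu (\bigcup_n O n `\` \bigcup_n F n) <= \sum_(0 <= n <oo) mu (O n `\` F n))%E.
Proof.
move=> mO mF; apply: measure_sigma_subadditive.
- by move=> n; apply: measurableD.
- by apply: measurableD; apply: bigcupT_measurable.
- by move=> x [[n _ Onx] nFx]; exists n => //; split=> // Fnx; apply: nFx; exists n.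
Qed.

Lemma finite_measure_bigcupD_lt d (T : measurableType d) (R : realType)
    (mu : {finite_measure set T -> \bar R}) (F : (set T)^nat) :
  (forall n, measurable (F n)) -> {homo F : n m / (n <= m)%N >-> n `<=` m} ->
  forall e : R, 0 < e -> exists N, (mu (\bigcup_n F n `\` F N) < e%:E)%E.
Proof.
move=> mF ndF e e0; have mUF : measurable (\bigcup_n F n) by exact: bigcupT_measurable.
have finF n : mu (F n) \is a fin_num by exact: fin_num_measure.
have finUF : mu (\bigcup_n F n) \is a fin_num by exact: fin_num_measure.
have cvgF := @nondecreasing_cvg_mu _ _ _ mu F mF mUF
  (fun n m nm => introT (subsetPset _ _) (ndF n m nm)).
have {}cvgF : mu \o F @ \oo --> (fine (mu (\bigcup_n F n)))%:E by rewrite fineK.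
have [N _ NP] := (cvgrPdist_lt _ _).1 (fine_cvg cvgF) e e0.
exists N; have := NP N (leqnn N); rewrite /= measureD ?ltey_eq ?finUF //.
rewrite setIidr; last by move=> x FNx; exists N.
have -> : (mu (\bigcup_n F n) - mu (F N) =
            (fine (mu (\bigcup_n F n)) - fine (mu (F N)))%:E)%E.
  by rewrite EFinB !fineK.
by rewrite lte_fin; apply: le_lt_trans (ler_norm _).
Qed.

Section regularity.
Variables (R : realType) (G : topologicalZmodType).
Variable mu : {finite_measure set (borel_of G) -> \bar R}.

Definition regular_set (B : set G) := forall e : R, 0 < e -> exists F U : set G,
  [/\ closed F, open U, F `<=` B, B `<=` U & (mu (U `\` F) < e%:E)%E].

Lemma closed_bigcup_inner (F : (set G)^nat) : (forall n, closed (F n)) ->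
  forall e : R, 0 < e -> exists C : set G,
    [/\ closed C, C `<=` \bigcup_n F n & (mu (\bigcup_n F n `\` C) < e%:E)%E].
Proof.
move=> cF e e0; pose P N := \big[setU/set0]_(i < N.+1) F i.
have cP N : closed (P N) by apply: closed_bigsetU => i _; exact: cF.
have ndP : {homo P : n m / (n <= m)%N >-> n `<=` m}.
  move=> n m nm x; rewrite /P -!bigcup_mkord => -[i /= ilt Fix].
  by exists i => //=; apply: leq_trans nm.
have [N] := finite_measure_bigcupD_lt mu (fun N => borel_closed (cP N)) ndP e0.
rewrite bigcup_bigsetU_bigcup => PN; exists (P N); split=> // x PNx.
by have [n _ Fnx] := bigsetU_bigcup PNx; exists n.
Qed.

Lemma regular_setC (B : set G) : regular_set B -> regular_set (~` B).
Proof.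
move=> rB e e0; have [F [U [cF oU FB BU UF]]] := rB e e0.
exists (~` U), (~` F); split.
- exact: open_closedC.
- exact: closed_openC.
- by move=> x Ux Bx; apply/Ux/BU.
- by move=> x Bx /FB.
- by rewrite setDE setCK setIC -setDE.
Qed.

Lemma regular_bigcup (A : (set G)^nat) :
  (forall n, regular_set (A n)) -> regular_set (\bigcup_n A n).
Proof.
move=> rA e e0; have e2 : 0 < e / 2 by rewrite divr_gt0.
have /choice[FU FUP] : forall n, exists FU : set G * set G,
    [/\ closed FU.1, open FU.2, FU.1 `<=` A n, A n `<=` FU.2 &
        (mu (FU.2 `\` FU.1) < (e / 2 / (2 ^ n.+1)%:R)%:E)%E].
  move=> n; have [|F [U FUn]] := rA n (e / 2 / (2 ^ n.+1)%:R).
    by rewrite divr_gt0 // ltr0n expn_gt0.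
  by exists (F, U).
pose F n := (FU n).1; pose U n := (FU n).2.
have cF n : closed (F n) by case: (FUP n).
have mF n : measurable (F n : set (borel_of G)) by exact: borel_closed.
have mU n : measurable (U n : set (borel_of G)) by apply: borel_open; case: (FUP n).
have [C [cC CF FC]] := closed_bigcup_inner cF e2.
have UF : (mu (\bigcup_n U n `\` \bigcup_n F n) <= (e / 2)%:E)%E.
  apply: le_trans (measure_bigcupD_le mu mU mF) _.
  apply: le_trans (epsilon_trick0 xpredT (ltW e2)).
  by apply: lee_nneseries => [n _ _|n _]; [exact: measure_ge0|apply/ltW; case: (FUP n)].
exists C, (\bigcup_n U n); split => //.
- by apply: bigcup_open => n _; case: (FUP n).
- move=> x /CF[n _ Fnx].
  by exists n => //; case: (FUP n) => _ _ + _ _; apply.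
- by move=> x [n _ Anx]; exists n => //; case: (FUP n) => _ _ _ + _; apply.
have mUU : measurable (\bigcup_n U n : set (borel_of G)) by exact: bigcupT_measurable.
have mUF : measurable (\bigcup_n F n : set (borel_of G)) by exact: bigcupT_measurable.
have mC := borel_closed cC.
apply: (@le_lt_trans _ _ (mu ((\bigcup_n U n `\` \bigcup_n F n) `|`
                              (\bigcup_n F n `\` C)))).
  apply: le_measure; rewrite ?inE.
  - exact: measurableD.
  - by apply: measurableU; exact: measurableD.
  - by move=> x [UUx Cx]; have [UFx|] := pselect ((\bigcup_n F n) x); [right|left].
apply: le_lt_trans (measureU2 _ _ _) _; try exact: measurableD.
rewrite [e]splitr EFinD; apply: lee_ltD => //.
by apply: fin_num_measure; exact: measurableD.
Qed.

End regularity.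

Section borel_regularity.
Variables (R : realType) (G : topologicalZmodType).
Variable mu : {finite_measure set (borel_of G) -> \bar R}.
Hypothesis open_bigcup_closedG : forall U : set G, open U ->
  exists F : (set G)^nat, (forall n, closed (F n)) /\ \bigcup_n F n = U.

Lemma regular_open (U : set G) : open U -> regular_set mu U.
Proof.
move=> oU e e0; have [F [cF UF]] := open_bigcup_closedG oU.
have [C [cC CF FC]] := closed_bigcup_inner mu cF e0.
by exists C, U; split; rewrite // -UF.
Qed.

Lemma borel_regular (B : set G) : measurable (B : set (borel_of G)) -> regular_set mu B.
Proof.
pose M := [set B : set (borel_of G) | measurable B /\ regular_set mu B].
have M_sigma : sigma_algebra setT M.
  split.
  - split; first exact: measurable0.
    move=> e e0; exists set0, set0; split=> //; [exact: closed0|exact: open0|].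
    by rewrite set0D measure0.
  - by move=> X [mX rX]; split; [exact: measurableD|rewrite setTD; exact: regular_setC].
  - move=> X MX; split; first by apply: bigcupT_measurable => n; case: (MX n).
    by apply: regular_bigcup => n; case: (MX n).
move=> mB; suff [] : M B by [].
apply: (smallest_sub M_sigma _ mB) => U oU.
by split; [exact: borel_open|exact: regular_open].
Qed.

End borel_regularity.

Lemma compact_add_nbhs0 (G : topologicalZmodType) (K U : set G) :
  compact K -> open U -> K `<=` U ->
  exists V : set G, [/\ open V, V 0 & forall v x, V v -> K x -> U (x + v)].
Proof.
move=> cK oU KU.
have KU_near x : K x -> \forall x' \near x & v \near nbhs (0 : G), U (x' + v).
  move=> Kx; apply: (add_continuous (x, 0)); rewrite addr0.
  exact: open_nbhs_nbhs (conj oU (KU x Kx)).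
have := (compact_near_coveringP K).1 cK G (nbhs (0 : G)) (fun v x => U (x + v)).
move=> /(_ (nbhs_filter _) KU_near); rewrite nbhsE => -[V [oV V0] VU].
by exists V; split=> // v x Vv Kx; exact: VU.
Qed.

Section steinhaus.
Variables (R : realType) (G : topologicalZmodType).
Hypothesis compactG : compact [set: G].
Variable mu : {finite_measure set (borel_of G) -> \bar R}.
Hypothesis mu_addl : forall (x : G) (A : set (borel_of G)), measurable A ->
  mu [set x + a | a in A] = mu A.

Let muE (X : set G) : measurable (X : set (borel_of G)) -> mu X = (fine (mu X))%:E.
Proof. by move=> mX; rewrite fineK //; exact: fin_num_measure. Qed.

Lemma steinhaus (S : set G) : measurable (S : set (borel_of G)) -> regular_set mu S ->
  (0 < mu S)%E ->
  exists V : set G, [/\ open V, V 0 & V `<=` [set s - t | s in S & t in S]].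
Proof.
move=> mS rS; rewrite (muE mS) lte_fin => muS0.
have [F [U [cF oU FS SU UF]]] := rS _ (divr_gt0 muS0 (ltr0Sn _ 1)).
have cpF := subclosed_compact cF compactG (@subsetT _ F).
have [V [oV V0 FVU]] := compact_add_nbhs0 cpF oU (subset_trans FS SU).
(* For v outside S - S, F and v + F are disjoint subsets of U, so
   2 mu F <= mu U = mu F + mu (U `\` F) and mu S <= 2 mu (U `\` F) < mu S. *)
exists V; split=> // v Vv; apply: contrapT => SSv.
have mF := borel_closed cF; have mU := borel_open oU; have mvF := borel_addl v mF.
have mUF : measurable (U `\` F : set (borel_of G)) by exact: measurableD.
have FvF0 : F `&` [set v + x | x in F] = set0.
  apply/seteqP; split=> // y [Fy [x Fx xy]]; apply: SSv.
  by exists y; [exact: FS|exists x; [exact: FS|rewrite -xy addrK]].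
have twoF : (mu F + mu F <= mu U)%E.
  rewrite -{2}(mu_addl v mF) -measureU //; apply: le_measure; rewrite ?inE //.
    exact: measurableU.
  by move=> y [/FS/SU|[x Fx <-]] //; rewrite addrC; exact: FVU.
have UFU : mu U = (mu F + mu (U `\` F))%E.
  rewrite -measureU ?setDUK //; first by move=> x /FS/SU.
  by apply/seteqP; split=> // x [Fx []].
have SU' : (mu S <= mu U)%E by apply: le_measure; rewrite ?inE.
move: twoF UFU SU' UF; rewrite (muE mS) (muE mF) (muE mU) (muE mUF).
rewrite -!EFinD !lee_fin !lte_fin /= => ? [] *; lra.
Qed.

End steinhaus.

Lemma double_add_continuous (G : topologicalZmodType) :
  continuous (fun z : G * G => z.1 *+ 2 + z.2).
Proof.
apply: (@add_fun_continuous _ _ (fun z : G * G => z.1 + z.1) snd) => [|z].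
  by apply: add_fun_continuous => z; exact: cvg_fst.
exact: cvg_snd.
Qed.

Section doubling_sections.
Variables (R : realType) (G : topologicalZmodType).
Hypothesis open_prod_measurableG : forall W : set (G * G), open W ->
  measurable (W : set (borel_of G * borel_of G)).
Variable mu : {finite_measure set (borel_of G) -> \bar R}.
Hypothesis mu_addl : forall (x : G) (A : set (borel_of G)), measurable A ->
  mu [set x + a | a in A] = mu A.
Variable A : set G.
Hypothesis mA : measurable (A : set (borel_of G)).

Let P : set (borel_of G * borel_of G) := [set z | A z.1 /\ A (z.1 *+ 2 + z.2)].

Let mP : measurable P.
Proof.
have -> : P = (A `*` setT) `&` ((fun z : G * G => z.1 *+ 2 + z.2) @^-1` A).
  by apply/seteqP; split=> -[a y] /=; [case=> ? ?|case=> -[? ?] ?].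
apply: measurableI; first exact: measurableX.
rewrite -[_ @^-1` _]setTI; apply: (open_preimage_measurable_fun _ measurableT mA).
move=> U oU; apply: open_prod_measurableG.
by move/continuousP : (@double_add_continuous G); apply.
Qed.

Let mu_xsection x : mu (xsection P x) = (mu A * (\1_A x)%:E)%E.
Proof.
rewrite indicE; have [Ax|nAx] := pselect (A x).
  rewrite mem_set // mule1 -(mu_addl (- (x *+ 2)) mA); congr (mu _).
  apply/seteqP; split=> y; rewrite /xsection /= in_setE /=.
    by case=> _ Ay; exists (x *+ 2 + y) => //; rewrite addKr.
  by case=> a Aa <-; split=> //=; rewrite addNKr.
rewrite memNset // mule0 -(measure0 mu); congr (mu _).
by apply/seteqP; split=> y; rewrite /xsection /= in_setE /= => -[].
Qed.

Lemma integral_doubling_sections :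
  (\int[mu]_y mu [set a : G | A a /\ A (a *+ 2 + y)%R] = mu A * mu A)%E.
Proof.
have ysectionE (y : G) : ysection P y = [set a : G | A a /\ A (a *+ 2 + y)%R].
  by apply/seteqP; split=> a; rewrite /ysection /= in_setE.
have -> : (fun y => mu [set a : G | A a /\ A (a *+ 2 + y)%R]) = mu \o ysection P.
  by apply/funext => y /=; rewrite ysectionE.
rewrite -(indic_fubini_tonelli_GE mu mP) -indic_fubini_tonelli //.
rewrite (indic_fubini_tonelli_FE mu mP).
have finA : mu A \is a fin_num by exact: fin_num_measure.
rewrite (eq_integral (fun x : borel_of G => (fine (mu A))%:E * (\1_A x)%:E)%E);
  last by move=> x _; rewrite fineK //; exact: mu_xsection.
rewrite ge0_integralZl_EFin ?integral_indic ?setIT ?fineK //.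
- by apply/measurable_EFinP; exact: measurable_indic.
- by rewrite fine_ge0 ?measure_ge0.
Qed.

Lemma doubling_section_gt0 : (0 < mu A)%E ->
  exists y, (0 < mu [set a : G | A a /\ A (a *+ 2 + y)%R])%E.
Proof.
move=> muA0; apply: contrapT => /forallNP sections0.
have : (\int[mu]_y mu [set a : G | A a /\ A (a *+ 2 + y)%R] = 0)%E.
  apply: integral0_eq => y _; apply/eqP; rewrite eq_le measure_ge0 andbT.
  by rewrite leNgt; apply/negP; exact: sections0.
rewrite integral_doubling_sections => /eqP; rewrite mule_eq0 orbb => /eqP muA.
by move: muA0; rewrite muA ltxx.
Qed.

End doubling_sections.

Lemma closed_continuous_image (T U : topologicalType) (f : T -> U) (A : set T) :
  compact [set: T] -> hausdorff_space U -> continuous f -> closed A -> closed (f @` A).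
Proof.
move=> cT hU cf cA; apply: compact_closed => //; apply: continuous_compact.
  exact: continuous_subspaceT.
exact: subclosed_compact cA cT (@subsetT _ A).
Qed.

Section open_doubling.
Variable G : topologicalZmodType.
Hypotheses (compactG : compact [set: G]) (hausdorffG : hausdorff_space G).
Variable g : G.
Hypothesis dense_g : dense [set g *~ n | n in [set: int]].

Let closed_image (f : G -> G) (A : set G) : continuous f -> closed A -> closed (f @` A).
Proof. exact: closed_continuous_image. Qed.

Let D := range (fun x : G => x *+ 2).

Let closed_doubles : closed D.
Proof. by apply: closed_image; [exact: double_continuous|exact: closedT]. Qed.

Let closed_shifted_doubles : closed [set g + y | y in D].
Proof. by apply: closed_image => //; exact: addl_continuous. Qed.

Lemma doubles_cover : D `|` [set g + y | y in D] = setT.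
Proof.
apply/seteqP; split=> // x _; apply: contrapT => Ex.
have oE := closed_openC (closedU closed_doubles closed_shifted_doubles).
have [y [/= Ey [n _ gny]]] := dense_g (ex_intro _ x Ex) oE.
apply: Ey; rewrite -gny (divz_eq n 2) mulrzDr mulrzA -mulrz_nat.
have [->|->] : ((n %% 2)%Z = 0 \/ (n %% 2)%Z = 1) by lia.
  by left; exists (g *~ (n %/ 2)%Z); rewrite // mulr0z addr0.
by right; exists ((g *~ (n %/ 2)%Z) *+ 2); [exists (g *~ (n %/ 2)%Z)|rewrite addrC].
Qed.

Lemma open_doubles : open D.
Proof.
(* If g is in 2G then 2G = G, otherwise 2G is the complement of g + 2G. *)
have [[u _ ug]|Dg] := pselect (D g).
  suff -> : D = setT by exact: openT.
  apply/seteqP; split=> // x; rewrite -doubles_cover => -[//|[_ [v _ <-] <-]].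
  by exists (u + v); rewrite // mulrnDl ug.
suff -> : D = ~` [set g + y | y in D].
  exact: closed_openC.
apply/seteqP; split=> [_ [u _ <-] [_ [v _ <-]] vgu|x gDx].
  by apply: Dg; exists (u - v); rewrite // mulrnBl -vgu addrK.
have : (D `|` [set g + y | y in D]) x by rewrite doubles_cover.
by case=> // /gDx.
Qed.

Lemma open_doubling (V : set G) : open V -> open [set v *+ 2 | v in V].
Proof.
(* 2V = 2G minus 2C, where C is the closed set of those x with x + ker 2
   disjoint from V. *)
move=> oV; pose K := [set k : G | k *+ 2 = 0].
pose C := ~` \bigcup_(k in K) ((fun x => k + x) @^-1` V).
have cC : closed C.
  apply: open_closedC; apply: bigcup_open => k _.
  by move/continuousP : (@addl_continuous _ k); apply.
have -> : [set v *+ 2 | v in V] = D `&` ~` [set x *+ 2 | x in C].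
  apply/seteqP; split=> [_ [v Vv <-]|_ [[x _ <-] C2x]].
    split; first by exists v.
    move=> [c Cc cv]; apply: Cc; exists (v - c); last by rewrite /= addrNK.
    by rewrite /K /= mulrnBl cv subrr.
  have /contrapT[k k2 Vkx] : ~ C x by move=> Cx; apply: C2x; exists x.
  by exists (k + x) => //; rewrite mulrnDl [k *+ 2]k2 add0r.
apply: openI; first exact: open_doubles.
by apply/closed_openC/closed_image => //; exact: double_continuous.
Qed.

End open_doubling.

Section normalized_measure.
Variables (d : measure_display) (T : measurableType d) (R : realType).
Variable mu : {measure set T -> \bar R}.
Hypothesis mu1 : mu setT = 1%E.

Definition normalized_probability of mu setT = 1%E : set T -> \bar R := mu.
HB.instance Definition _ := Measure.on (normalized_probability mu1).
HB.instance Definition _ :=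
  Measure_isProbability.Build _ _ _ (normalized_probability mu1) mu1.

End normalized_measure.

Unset Implicit Arguments.
Theorem corollary7p6 (R : realType) (G : topologicalZmodType)
  (mu : {measure set (borel_of G) -> \bar R}) (A : set G) :
  compact [set: G] -> metrizable R G -> monothetic G ->
  haar_measure mu ->
  measurable (A : set (borel_of G)) -> (0 < mu A)%E ->
  exists U : set G, [/\ open U, U !=set0 & U `<=` twoA_minus_A A].
Proof.
move=> compactG [d [d0 dE dC dT dO]] [g dense_g] [mu1 mu_addl] mA muA0.
pose P := normalized_probability mu1.
have [b [ob bbase]] := compact_countable_base dE dC dT dO compactG.
have [y0 Sy0] :=
  doubling_section_gt0 (open_prod_measurable ob bbase) (mu := P) mu_addl mA muA0.
pose S := [set a : G | A a /\ A (a *+ 2 + y0)].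
have mS : measurable (S : set (borel_of G)).
  apply: measurableI => //; apply: borel_preimage mA.
  apply: (@add_fun_continuous _ _ (fun a : G => a *+ 2) (cst y0)) => [|a].
    exact: double_continuous.
  exact: cvg_cst.
have rS := borel_regular P (open_bigcup_closed dE dC dT dO) mS.
have [V [oV V0 VSS]] := steinhaus compactG (mu := P) mu_addl mS rS Sy0.
exists [set - y0 + w | w in [set v *+ 2 | v in V]]; split.
- rewrite image_addl; move/continuousP : (@addl_continuous _ (- - y0)); apply.
  apply: (open_doubling compactG _ dense_g oV).
  exact: (metric_hausdorff d0 dE dC dT dO).
- by exists (- y0 + 0 *+ 2), (0 *+ 2) => //; exists 0.
- move=> _ [_ [v Vv <-] <-]; have [s [As _] [t [At At2y0] <-]] := VSS v Vv.
  exists s => //; exists (t *+ 2 + y0) => //.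
  by rewrite mulrnBl opprD addrA [RHS]addrC.
Qed.
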